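(* Let $K/F$ be a cyclic Galois extension of number fields of degree $m$ with $\mathrm{Gal}(K/F)=\langle\sigma\rangle$, and let $\mathcal{O}_F\subset\mathcal{O}_K$ be the rings of integers. Let $d\in\mathcal{O}_K^\times$ be such that $t^m-d$ is irreducible in the skew polynomial ring $K[t;\sigma]$, so that $(K/F,\sigma,d)=K[t;\sigma]/K[t;\sigma](t^m-d)$ is a nonassociative cyclic division algebra, and let $\Lambda=\mathcal{O}_K[t;\sigma]/\mathcal{O}_K[t;\sigma](t^m-d)$ be its natural order. Let $\mathcal{I}$ be a non-zero ideal of $\mathcal{O}_F$. Define $\overline{\sigma}$ on $\mathcal{O}_K/\mathcal{I}\mathcal{O}_K$ by $\overline{\sigma}(u+\mathcal{I}\mathcal{O}_K)=\sigma(u)+\mathcal{I}\mathcal{O}_K$ and put $\bar d=d+\mathcal{I}\mathcal{O}_K$. Then $\mathcal{I}\Lambda$ is a two-sided ideal of $\Lambda$ and $$\Lambda/\mathcal{I}\Lambda\cong\big((\mathcal{O}_K/\mathcal{I}\mathcal{O}_K)/(\mathcal{O}_F/\mathcal{I}),\overline{\sigma},\bar d\big),$$ a generalized nonassociative cyclic algebra over $\mathcal{O}_F/\mathcal{I}$ (the isomorphism being induced by reducing coefficients modulo $\mathcal{I}\mathcal{O}_K$).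
   Context: For a unital associative ring $S$ and an injective ring endomorphism $\sigma$ of $S$, $S[t;\sigma]$ denotes the skew polynomial ring of polynomials $\sum a_it^i$, $a_i\in S$, with multiplication determined by $ta=\sigma(a)t$. For a monic $f\in S[t;\sigma]$ of degree $m$, every $g$ has a unique right division $g=qf+r$ with $\deg r<m$; the Petit algebra $S[t;\sigma]/S[t;\sigma]f$ is the additive group of polynomials of degree $<m$ with multiplication $g\circ h=gh \bmod_r f$ (remainder of right division by $f$); it is a unital, in general nonassociative, ring. For commutative rings $S_0\subset S$ with $S_0\subset\mathrm{Fix}(\sigma)$ and $c\in S$, the (generalized) nonassociative cyclic algebra $(S/S_0,\sigma,c)$ is the Petit algebra $S[t;\sigma]/S[t;\sigma](t^m-c)$, regarded as an $S_0$-algebra. Elements of $\Lambda$ are polynomials $\sum_{i=0}^{m-1}a_it^i$ with $a_i\in\mathcal{O}_K$, and $\mathcal{I}\Lambda=\{\sum_{i=0}^{m-1}a_it^i: a_i\in\mathcal{I}\mathcal{O}_K\}$. *)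

From HB Require Import structures.
From mathcomp Require Import all_boot all_order all_algebra all_fingroup all_solvable all_field.
Set Implicit Arguments. Unset Strict Implicit. Unset Printing Implicit Defensive.
Import Order.TTheory GRing.Theory Num.Theory.
Local Open Scope ring_scope.

(* Skew polynomials S[t;s] over a ring S, represented by coefficient   *)
(* functions  nat -> S  (coefficient of t^k), with (a t^i)(b t^j) =    *)
(* a s^i(b) t^(i+j).                                                   *)
Section Skew.
Variable S : pzRingType.
Variable s : S -> S.

(* product of two skew polynomials whose coefficients vanish from index n on *)
Definition skew_mul (a b : nat -> S) (n : nat) : nat -> S :=
  fun k => \sum_(i < n) \sum_(j < n | (i + j == k)%N) a i * iter i s (b j).

(* one step of right division by a monic f of degree m: remove the     *)
(* coefficient of t^k (k >= m) of g by subtracting (g_k t^(k-m)) * f.  *)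
Definition rdiv_step (f : nat -> S) (m k : nat) (g : nat -> S) : nat -> S :=
  fun i => g i - (if (k - m <= i)%N
                  then g k * iter (k - m) s (f (i - (k - m))%N) else 0).

Fixpoint rdiv_red (f : nat -> S) (m n : nat) (g : nat -> S) : nat -> S :=
  match n with
  | 0 => g
  | n'.+1 => rdiv_red f m n' (rdiv_step f m (m + n') g)
  end.

(* remainder of right division of g (coefficients zero from index N on) *)
(* by the monic f of degree m: eliminates t^(N-1), ..., t^m in turn.    *)
Definition rmod_r (f : nat -> S) (m N : nat) (g : nat -> S) : nat -> S :=
  rdiv_red f m (N - m) g.

Definition cyc_poly (m : nat) (c : S) : nat -> S :=
  fun k => if k == m then 1 else if k == 0%N then - c else 0.

(* elements of the Petit algebra S[t;s]/S[t;s]f : polynomials of degree < m *)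
Definition coefs (m : nat) (g : {ffun 'I_m -> S}) : nat -> S :=
  fun k => if insub k is Some i then g i else 0.

Definition petit_mul (m : nat) (f : nat -> S) (g h : {ffun 'I_m -> S})
  : {ffun 'I_m -> S} :=
  [ffun i : 'I_m => rmod_r f m (2 * m) (skew_mul (coefs g) (coefs h) m) i].

Definition cyc_mul (m : nat) (c : S) (g h : {ffun 'I_m -> S}) : {ffun 'I_m -> S} :=
  petit_mul (cyc_poly m c) g h.

End Skew.

Section NF.
Variable L : fieldExtType rat.

Definition integral_Z (x : L) : Prop :=
  exists p : {poly int}, p \is monic /\ root (map_poly intr p) x.

Definition ring_of_integers (E : {vspace L}) (x : L) : Prop :=
  x \in E /\ integral_Z x.

Definition nonzero_ideal (O I : L -> Prop) : Prop :=
  [/\ forall x, I x -> O x,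
      I 0,
      forall x y, I x -> I y -> I (x + y),
      forall a x, O a -> I x -> I (a * x)
    & exists x, I x /\ x <> 0].

Definition ext_ideal (I OK : L -> Prop) (x : L) : Prop :=
  exists n (a b : 'I_n -> L), (forall i, I (a i)) /\ (forall i, OK (b i)) /\
    x = \sum_(i < n) a i * b i.

Definition skew_irreducible (E : {vspace L}) (s : L -> L) (m : nat)
  (f : nat -> L) : Prop :=
  ~ exists g h : nat -> L,
      [/\ forall k, g k \in E, forall k, h k \in E,
          forall k, (m <= k)%N -> g k = 0, forall k, (m <= k)%N -> h k = 0
        & forall k, skew_mul s g h m k = f k].

End NF.

From HB Require Import structures.
From mathcomp Require Import all_boot all_order all_algebra all_fingroup all_solvable all_field.
Set Implicit Arguments. Unset Strict Implicit. Unset Printing Implicit Defensive.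
Import Order.TTheory GRing.Theory Num.Theory.
Local Open Scope ring_scope.

(* Every coefficient of a Petit product g o h is built from the coefficients
   of g, h and t^m - d by 0, 1, +, -, * and sigma alone: right division by the
   monic t^m - d only subtracts multiples of it.  Hence every relation between
   two coefficient rings that respects these operations is respected by the
   product.  For membership in O_K and in I O_K (an O_K-module stable under
   sigma, since sigma fixes I <= O_F) this makes I Lambda a two-sided ideal;
   for the graph of the reduction map O_K -> O_K / I O_K it makes reduction of
   coefficients multiplicative. *)

Section Parametricity.
Variables (S1 S2 : pzRingType) (s1 : S1 -> S1) (s2 : S2 -> S2).
Variables (RA RB RC RQ : S1 -> S2 -> Prop).
Hypothesis RC0 : RC 0 0.
Hypothesis RCD : forall x y x' y', RC x y -> RC x' y' -> RC (x + x') (y + y').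
Hypothesis RCB : forall x y x' y', RC x y -> RC x' y' -> RC (x - x') (y - y').
Hypothesis RBs : forall x y, RB x y -> RB (s1 x) (s2 y).
Hypothesis RQs : forall x y, RQ x y -> RQ (s1 x) (s2 y).
Hypothesis RABM : forall x y x' y', RA x y -> RB x' y' -> RC (x * x') (y * y').
Hypothesis RCQM : forall x y x' y', RC x y -> RQ x' y' -> RC (x * x') (y * y').

Lemma iter_rel (R : S1 -> S2 -> Prop) n x y :
  (forall x y, R x y -> R (s1 x) (s2 y)) -> R x y -> R (iter n s1 x) (iter n s2 y).
Proof. by move=> Rs Rxy; elim: n => //= n; apply: Rs. Qed.

Lemma skew_mul_rel n a a' b b' :
  (forall k, RA (a k) (a' k)) -> (forall k, RB (b k) (b' k)) ->
  forall k, RC (skew_mul s1 a b n k) (skew_mul s2 a' b' n k).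
Proof.
move=> Ra Rb k; apply: (big_ind2 RC RC0 RCD) => i _.
apply: (big_ind2 RC RC0 RCD) => j _.
by apply: RABM => //; apply: iter_rel.
Qed.

Lemma rmod_r_rel f f' m N g g' :
  (forall k, RQ (f k) (f' k)) -> (forall k, RC (g k) (g' k)) ->
  forall k, RC (rmod_r s1 f m N g k) (rmod_r s2 f' m N g' k).
Proof.
rewrite /rmod_r => Rf; elim: (N - m)%N g g' => //= n IHn g g' Rg.
apply: IHn => i; apply: RCB => //.
by case: ifP => _ //; apply: RCQM => //; apply: iter_rel.
Qed.

Lemma coefs_rel (R : S1 -> S2 -> Prop) m (g : {ffun 'I_m -> S1}) (g' : {ffun 'I_m -> S2}) :
  R 0 0 -> (forall i, R (g i) (g' i)) -> forall k, R (coefs g k) (coefs g' k).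
Proof. by move=> R0 Rg k; rewrite /coefs; case: insubP. Qed.

Lemma cyc_poly_rel (R : S1 -> S2 -> Prop) m c c' :
  R 0 0 -> R 1 1 -> R (- c) (- c') -> forall k, R (cyc_poly m c k) (cyc_poly m c' k).
Proof. by move=> R0 R1 Rc k; rewrite /cyc_poly; case: ifP => _ //; case: ifP. Qed.

Lemma cyc_mul_rel m c c' (g h : {ffun 'I_m -> S1}) (g' h' : {ffun 'I_m -> S2}) :
  RA 0 0 -> RB 0 0 -> RQ 0 0 -> RQ 1 1 -> RQ (- c) (- c') ->
  (forall i, RA (g i) (g' i)) -> (forall i, RB (h i) (h' i)) ->
  forall i, RC (cyc_mul s1 c g h i) (cyc_mul s2 c' g' h' i).
Proof.
move=> RA0 RB0 RQ0 RQ1 RQc Rg Rh i; rewrite !ffunE.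
apply: rmod_r_rel; first exact: cyc_poly_rel.
by apply: skew_mul_rel; apply: coefs_rel.
Qed.

End Parametricity.

Section RingOfIntegers.
Variables (L : splittingFieldType rat) (K : {subfield L}).
Notation OK := (ring_of_integers K).

Lemma integral_Z_integralOver (x : L) : integral_Z x <-> integralOver (intr : int -> L) x.
Proof. by split=> [[p [? ?]]|[p ? ?]]; exists p. Qed.

Lemma ring_of_integers0 : OK 0.
Proof. by split; [rewrite mem0v | apply/integral_Z_integralOver/integral0]. Qed.

Lemma ring_of_integers1 : OK 1.
Proof. by split; [rewrite mem1v | apply/integral_Z_integralOver/integral1]. Qed.

Lemma ring_of_integersD x y : OK x -> OK y -> OK (x + y).
Proof.
move=> [Kx /integral_Z_integralOver ix] [Ky /integral_Z_integralOver iy].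
by split; [rewrite rpredD | apply/integral_Z_integralOver/integral_add].
Qed.

Lemma ring_of_integersN x : OK x -> OK (- x).
Proof.
move=> [Kx /integral_Z_integralOver ix].
by split; [rewrite rpredN | apply/integral_Z_integralOver/integral_opp].
Qed.

Lemma ring_of_integersB x y : OK x -> OK y -> OK (x - y).
Proof. by move=> Ox Oy; apply/ring_of_integersD/ring_of_integersN. Qed.

Lemma ring_of_integersM x y : OK x -> OK y -> OK (x * y).
Proof.
move=> [Kx /integral_Z_integralOver ix] [Ky /integral_Z_integralOver iy].
by split; [rewrite rpredM | apply/integral_Z_integralOver/integral_mul].
Qed.

Lemma ring_of_integers_gal (sigma : gal_of K) x : OK x -> OK (sigma x).
Proof.
move=> [Kx [p [mon_p root_p]]]; split; first exact: memv_gal.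
exists p; split => //; have := rmorph_root (gal_repr sigma) root_p.
by rewrite -map_poly_comp; congr (root _ _); apply: eq_map_poly => z /=; rewrite rmorph_int.
Qed.

Lemma ring_of_integersS (F : {subfield L}) x :
  (F <= K)%VS -> ring_of_integers F x -> OK x.
Proof. by move=> FK [Fx ix]; split => //; apply: (subvP FK). Qed.

End RingOfIntegers.

Section ExtendedIdeal.
Variables (L : splittingFieldType rat) (K : {subfield L}) (I : L -> Prop).
Notation OK := (ring_of_integers K).
Notation IOK := (ext_ideal I OK).

Lemma ext_ideal0 : IOK 0.
Proof. by exists 0%N, (fun=> 0), (fun=> 0); rewrite big_ord0; split; [case | split; [case |]]. Qed.

Lemma ext_idealD x y : IOK x -> IOK y -> IOK (x + y).
Proof.
move=> [n1 [a1 [b1 [Ia1 [Ob1 ->]]]]] [n2 [a2 [b2 [Ia2 [Ob2 ->]]]]].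
pose glue (u1 : 'I_n1 -> L) (u2 : 'I_n2 -> L) (i : 'I_(n1 + n2)) :=
  match split i with inl j => u1 j | inr j => u2 j end.
exists (n1 + n2)%N, (glue a1 a2), (glue b1 b2).
do 2?[split; first by move=> i; rewrite /glue; case: (split i)].
rewrite big_split_ord /glue; congr (_ + _); apply: eq_bigr => i _.
  by rewrite (unsplitK (inl i)).
by rewrite (unsplitK (inr i)).
Qed.

Lemma ext_idealMr x c : IOK x -> OK c -> IOK (x * c).
Proof.
move=> [n [a [b [Ia [Ob ->]]]]] Oc; exists n, a, (fun i => b i * c).
split=> //; split; first by move=> i; apply: ring_of_integersM.
by rewrite mulr_suml; apply: eq_bigr => i _; rewrite mulrA.
Qed.

Lemma ext_idealMl x c : IOK x -> OK c -> IOK (c * x).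
Proof. by rewrite mulrC; apply: ext_idealMr. Qed.

Lemma ext_idealN x : IOK x -> IOK (- x).
Proof.
by move=> Ix; rewrite -mulrN1; apply/ext_idealMr/ring_of_integersN/ring_of_integers1.
Qed.

Lemma ext_idealB x y : IOK x -> IOK y -> IOK (x - y).
Proof. by move=> Ix Iy; apply/ext_idealD/ext_idealN. Qed.

Variables (F : {subfield L}) (FK : (F <= K)%VS).
Hypothesis I_OF : forall x, I x -> ring_of_integers F x.

Lemma ext_ideal_sub x : IOK x -> OK x.
Proof.
move=> [n [a [b [Ia [Ob ->]]]]].
apply: (big_ind OK (ring_of_integers0 K) (@ring_of_integersD _ K)) => i _.
by apply: ring_of_integersM => //; apply: (ring_of_integersS FK); apply: I_OF.
Qed.

Lemma ext_ideal_gal (sigma : gal_of K) x :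
  (sigma \in 'Gal(K / F))%g -> IOK x -> IOK (sigma x).
Proof.
move=> galF [n [a [b [Ia [Ob ->]]]]]; exists n, a, (fun i => sigma (b i)).
split=> //; split; first by move=> i; apply: ring_of_integers_gal.
rewrite rmorph_sum; apply: eq_bigr => i _; rewrite rmorphM.
by congr (_ * _); apply: (fixed_gal FK galF); case: (I_OF (Ia i)).
Qed.

End ExtendedIdeal.

Section NaturalOrder.
Variables (L : splittingFieldType rat) (K : {subfield L}) (I : L -> Prop).
Variables (s : L -> L) (m : nat) (d : L).
Notation OK := (ring_of_integers K).
Notation IOK := (ext_ideal I OK).
Hypothesis OK_s : forall x, OK x -> OK (s x).
Hypothesis IOK_s : forall x, IOK x -> IOK (s x).
Hypothesis OKd : OK d.

Lemma cyc_mul_ext_ideal (g h : {ffun 'I_m -> L}) :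
  (forall i, OK (g i)) -> (forall i, IOK (h i)) ->
  (forall i, IOK (cyc_mul s d g h i)) /\ (forall i, IOK (cyc_mul s d h g i)).
Proof.
have [IOK0 OK0] := (ext_ideal0 K I, ring_of_integers0 K).
have OKNd := ring_of_integersN OKd.
have IOKD x (y : L) x' (y' : L) : IOK x -> IOK x' -> IOK (x + x') by apply: ext_idealD.
have IOKB x (y : L) x' (y' : L) : IOK x -> IOK x' -> IOK (x - x') by apply: ext_idealB.
have IOKMr x (y : L) x' (y' : L) : IOK x -> OK x' -> IOK (x * x') by apply: ext_idealMr.
have IOKMl x (y : L) x' (y' : L) : OK x -> IOK x' -> IOK (x * x').
  by move=> Ox Ix'; apply: ext_idealMl.
move=> Og Ih; split=> i.
  exact: (@cyc_mul_rel _ _ s s (fun x _ => OK x) (fun x _ => IOK x) (fun x _ => IOK x)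
    (fun x _ => OK x) IOK0 IOKD IOKB (fun x _ => @IOK_s x) (fun x _ => @OK_s x) IOKMl IOKMr
    m d d g h g h OK0 IOK0 OK0 (ring_of_integers1 K) OKNd Og Ih i).
exact: (@cyc_mul_rel _ _ s s (fun x _ => IOK x) (fun x _ => OK x) (fun x _ => IOK x)
  (fun x _ => OK x) IOK0 IOKD IOKB (fun x _ => @OK_s x) (fun x _ => @OK_s x) IOKMr IOKMr
  m d d h g h g IOK0 OK0 OK0 (ring_of_integers1 K) OKNd Ih Og i).
Qed.

Variables (S : comPzRingType) (pi : L -> S) (sbar : S -> S).
Hypothesis pi1 : pi 1 = 1.
Hypothesis piD : forall x y, OK x -> OK y -> pi (x + y) = pi x + pi y.
Hypothesis piM : forall x y, OK x -> OK y -> pi (x * y) = pi x * pi y.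
Hypothesis pi_s : forall x, OK x -> sbar (pi x) = pi (s x).

Lemma reduction0 : pi 0 = 0.
Proof.
have OK0 := ring_of_integers0 K.
by apply: (@addrI _ (pi 0)); rewrite -piD // !addr0.
Qed.

Lemma reductionN x : OK x -> pi (- x) = - pi x.
Proof.
move=> Ox; apply: (@addrI _ (pi x)).
by rewrite -piD ?subrr ?reduction0 //; apply: ring_of_integersN.
Qed.

Definition reduces x y := OK x /\ pi x = y.

Lemma reduction_cyc_mul (g h : {ffun 'I_m -> L}) :
  (forall i, OK (g i)) -> (forall i, OK (h i)) ->
  [ffun i => pi (cyc_mul s d g h i)] =
  cyc_mul sbar (pi d) [ffun i => pi (g i)] [ffun i => pi (h i)].
Proof.
move=> Og Oh; apply/ffunP => i; rewrite ffunE.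
have R0 : reduces 0 0 by split; [apply: ring_of_integers0 | apply: reduction0].
have RD x y x' y' : reduces x y -> reduces x' y' -> reduces (x + x') (y + y').
  by move=> [Ox <-] [Ox' <-]; split; [apply: ring_of_integersD | apply: piD].
have RB x y x' y' : reduces x y -> reduces x' y' -> reduces (x - x') (y - y').
  move=> [Ox <-] [Ox' <-]; split; first exact: ring_of_integersB.
  by rewrite piD ?reductionN //; apply: ring_of_integersN.
have RM x y x' y' : reduces x y -> reduces x' y' -> reduces (x * x') (y * y').
  by move=> [Ox <-] [Ox' <-]; split; [apply: ring_of_integersM | apply: piM].
have Rs x y : reduces x y -> reduces (s x) (sbar y).
  by move=> [Ox <-]; split; [apply: OK_s | rewrite pi_s].
have R1 : reduces 1 1 by split; [apply: ring_of_integers1 | ].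
have RNd : reduces (- d) (- pi d).
  by split; [apply: ring_of_integersN | apply: reductionN].
have Rg j : reduces (g j) ([ffun i => pi (g i)] j) by split; rewrite ?ffunE.
have Rh j : reduces (h j) ([ffun i => pi (h i)] j) by split; rewrite ?ffunE.
by have [_ ->] := cyc_mul_rel R0 RD RB Rs Rs RM RM R0 R0 R0 R1 RNd Rg Rh i.
Qed.

Lemma reduction_ffun_onto :
  (forall u, exists x, OK x /\ pi x = u) ->
  forall u : {ffun 'I_m -> S}, exists g : {ffun 'I_m -> L},
    (forall i, OK (g i)) /\ [ffun i => pi (g i)] = u.
Proof.
move=> pi_onto u; have [g Hg] := fin_all_exists (fun i => pi_onto (u i)).
exists [ffun i => g i]; split=> [i | ]; first by rewrite ffunE; case: (Hg i).
by apply/ffunP => i; rewrite !ffunE; case: (Hg i).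
Qed.

Lemma reduction_ffun_eq0 :
  (forall x, OK x -> (pi x = 0 <-> IOK x)) ->
  forall g : {ffun 'I_m -> L}, (forall i, OK (g i)) ->
    ([ffun i => pi (g i)] = 0 <-> forall i, IOK (g i)).
Proof.
move=> pi_ker g Og; split=> [/ffunP g0 i | Ig].
  by apply/pi_ker => //; have := g0 i; rewrite !ffunE.
by apply/ffunP => i; rewrite !ffunE; apply/pi_ker.
Qed.

End NaturalOrder.

Theorem theorem1
  (L : splittingFieldType rat) (K F : {subfield L}) (sigma : gal_of K)
  (FK : (F <= K)%VS) (galKF : galois F K)
  (gen : ('Gal(K / F) = <[sigma]>)%g)
  (d : L) (I : L -> Prop) :
  let m := \dim_F K in
  let s := fun x : L => sigma x in
  let OK := ring_of_integers K in
  let OF := ring_of_integers F in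
  let IOK := ext_ideal I OK in
  let Lam := fun g : {ffun 'I_m -> L} => forall i, OK (g i) in
  let ILam := fun g : {ffun 'I_m -> L} => forall i, IOK (g i) in
  let mulL := cyc_mul s d in
  OK d -> d != 0 -> OK d^-1 ->
  skew_irreducible K s m (cyc_poly m d) ->
  nonzero_ideal OF I ->
  (* I Lambda is a two-sided ideal of Lambda *)
  ((forall g, ILam g -> Lam g) /\
   ILam 0 /\
   (forall g h, ILam g -> ILam h -> ILam (g + h)) /\
   (forall g, ILam g -> ILam (- g)) /\
   (forall g h, Lam g -> ILam h -> ILam (mulL g h) /\ ILam (mulL h g)))
  /\
  (* Lambda / I Lambda is isomorphic to ((O_K/I O_K)/(O_F/I), sigma-bar, d-bar),
     via reduction of coefficients: for any realization S of O_K / I O_K *)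
  (forall (S : comPzRingType) (pi : L -> S) (sbar : S -> S),
     pi 1 = 1 ->
     (forall x y, OK x -> OK y -> pi (x + y) = pi x + pi y) ->
     (forall x y, OK x -> OK y -> pi (x * y) = pi x * pi y) ->
     (forall u : S, exists x, OK x /\ pi x = u) ->
     (forall x, OK x -> (pi x = 0 <-> IOK x)) ->
     (forall x, OK x -> sbar (pi x) = pi (s x)) ->
     let phi := fun g : {ffun 'I_m -> L} => [ffun i => pi (g i)] in
     [/\ forall g h, Lam g -> Lam h -> phi (g + h) = phi g + phi h,
         forall g h, Lam g -> Lam h ->
           phi (mulL g h) = cyc_mul sbar (pi d) (phi g) (phi h),
         forall a g, OF a -> Lam g -> phi [ffun i => a * g i] = [ffun i => pi a * phi g i],
         forall u : {ffun 'I_m -> S}, exists g, Lam g /\ phi g = u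
       & forall g, Lam g -> (phi g = 0 <-> ILam g)]).
Proof.
(* The unit d, the irreducibility of t^m - d, I <> 0 and galKF only serve to
   make (K/F, sigma, d) a division algebra and O_K / I O_K finite; the
   isomorphism does not use them. *)
move=> m s OK OF IOK Lam ILam mulL OKd _ _ _ [I_OF _ _ _ _].
have sigmaF : (sigma \in 'Gal(K / F))%g by rewrite gen cycle_id.
have OK_s x : OK x -> OK (s x) := @ring_of_integers_gal _ K sigma x.
have IOK_s x : IOK x -> IOK (s x) := @ext_ideal_gal _ K I F FK I_OF sigma x sigmaF.
split.
  split; first by move=> g Ig i; apply: ext_ideal_sub FK I_OF _ (Ig i).
  split; first by move=> i; rewrite ffunE; apply: ext_ideal0.
  split; first by move=> g h Ig Ih i; rewrite ffunE; apply: ext_idealD (Ig i) (Ih i).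
  split; first by move=> g Ig i; rewrite ffunE; apply: ext_idealN (Ig i).
  by move=> g h; apply: cyc_mul_ext_ideal.
move=> S pi sbar pi1 piD piM pi_onto pi_ker pi_s phi; split.
- by move=> g h Og Oh; apply/ffunP => i; rewrite !ffunE piD.
- by move=> g h; apply: reduction_cyc_mul.
- move=> a g OFa Og; apply/ffunP => i; rewrite !ffunE piM //.
  exact: ring_of_integersS FK OFa.
- exact: reduction_ffun_onto.
- exact: reduction_ffun_eq0.
Qed.
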